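(* Suppose that a filtered vector space $V$ has positive Harder and Narasimhan data $\operatorname{HN}(\overrightarrow{\mu},\overrightarrow{r})$. Fixing a nonnegative integer $z \geq 0$, for each nonnegative integer $m \geq 0$, let $H^{\# S_{m,z}(\overrightarrow{\mu})}$ be the subspace of $V^{\otimes m}$ given by $$H^{\# S_{m,z}(\overrightarrow{\mu})} := \sum_{i=1}^{\# S_{m,z}(\overrightarrow{\mu})} \bigotimes_{j=1}^m V_{a_{ji}}.$$ Then $$\lim_{m \to \infty} \frac{\dim H^{\# S_{m,z}(\overrightarrow{\mu})}}{\dim V^{\otimes m}} = 1.$$
   Context: All vector spaces are over a fixed algebraically closed field $\mathbf{k}$ of characteristic zero. $V$ is a finite dimensional $\mathbf{k}$-vector space with a filtration (in the sense of Faltings and Wüstholz) $V = F^{\lambda_0}V \supsetneq F^{\lambda_1}V \supsetneq \dots \supsetneq F^{\lambda_n}V \supsetneq F^{\lambda_{n+1}}V = 0$, for real numbers $0 \leq \lambda_0 < \lambda_1 < \dots < \lambda_{n+1}$; slopes $\mu(\cdot)$ of subspaces and subquotients are computed with respect to the induced filtration. By Faltings–Wüstholz, $V$ admits a canonical Harder and Narasimhan filtration $0 = V_0 \subsetneq V_1 \subsetneq \dots \subsetneq V_\ell = V$ whose successive quotients $V_i/V_{i-1}$ are semistable with strictly decreasing slopes. Put $\mu_i := \mu(V_i/V_{i-1})$, $r_i := \dim(V_i/V_{i-1})$, $d_i := r_i\mu_i$ for $i=1,\dots,\ell$, $\overrightarrow{\mu} = (\mu_1,\dots,\mu_\ell)$,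 $\overrightarrow{r} = (r_1,\dots,r_\ell)$; this is the Harder and Narasimhan data $\operatorname{HN}(\overrightarrow{\mu},\overrightarrow{r})$, called positive if $\sum_{i=1}^\ell d_i > 0$. Let $[\ell] := \{1,\dots,\ell\}$. For $\mathbf{a} = (a_1,\dots,a_m) \in [\ell]^m$ set $v_{\overrightarrow{\mu}}(\mathbf{a}) := \sum_{j=1}^m \mu_{a_j}$, and $S_{m,z}(\overrightarrow{\mu}) := \{\mathbf{a} \in [\ell]^m : \sum_{j=1}^m \mu_{a_j} \geq z\}$. Write the elements of $[\ell]^m$ in decreasing order with respect to $v_{\overrightarrow{\mu}}(\cdot)$ as $\mathbf{a}_i = (a_{1i},\dots,a_{mi})$, $i = 1, 2, \dots$; thus $S_{m,z}(\overrightarrow{\mu})$ consists of the first $\# S_{m,z}(\overrightarrow{\mu})$ elements $\mathbf{a}_1,\dots,\mathbf{a}_{\# S_{m,z}(\overrightarrow{\mu})}$. *)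

From HB Require Import structures.
From mathcomp Require Import all_boot all_order all_algebra.
From mathcomp Require Import all_classical all_reals all_analysis.

Set Implicit Arguments.
Unset Strict Implicit.
Unset Printing Implicit Defensive.

Import Order.TTheory GRing.Theory Num.Theory.
Local Open Scope ring_scope.

Section Filtrations.
Variables (k : fieldType) (V : vectType k) (R : realType).

(* A Faltings--Wustholz filtration with jumps lam 0 < ... < lam N.+1:
   V = F 0 ⊋ F 1 ⊋ ... ⊋ F N ⊋ F N.+1 = 0, where F i stands for F^{lam i} V. *)
Definition is_filtration (N : nat) (lam : nat -> R) (F : nat -> {vspace V}) :=
  [/\ 0 <= lam 0%N,
      forall i, (i <= N)%N -> lam i < lam i.+1,
      F 0%N = fullv, F N.+1 = 0%VS &
      forall i, (i <= N)%N -> (F i.+1 <= F i)%VS && (F i.+1 != F i)].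

Variables (N : nat) (lam : nat -> R) (F : nat -> {vspace V}).

(* dimension of F^{lam i} of the subquotient W'/W with the induced filtration:
   F^{lam i}(W'/W) = ((F i :&: W') + W) / W *)
Definition fdim (W W' : {vspace V}) (i : nat) : R :=
  (\dim (F i :&: W'))%:R - (\dim (F i :&: W))%:R.

(* degree  sum_lambda lambda * dim Gr^lambda (W'/W) *)
Definition fdeg (W W' : {vspace V}) : R :=
  \sum_(i < N.+1) lam i * (fdim W W' i - fdim W W' i.+1).

Definition frank (W W' : {vspace V}) : nat := (\dim W' - \dim W)%N.

Definition slope (W W' : {vspace V}) : R := fdeg W W' / (frank W W')%:R.

Definition semistable (W W' : {vspace V}) : Prop :=
  forall U : {vspace V}, (W <= U)%VS -> (U <= W')%VS -> U != W ->
    slope W U <= slope W W'.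

Definition is_HN (ell : nat) (Vf : nat -> {vspace V}) : Prop :=
  [/\ (0 < ell)%N, Vf 0%N = 0%VS, Vf ell = fullv,
      forall i, (i < ell)%N -> (Vf i <= Vf i.+1)%VS && (Vf i != Vf i.+1) &
      (forall i, (i < ell)%N -> semistable (Vf i) (Vf i.+1)) /\
      forall i, (i.+1 < ell)%N -> slope (Vf i.+1) (Vf i.+2) < slope (Vf i) (Vf i.+1)].

(* HN data: mu_i and r_i for i = 1..ell *)
Definition HN_mu (Vf : nat -> {vspace V}) (i : nat) : R := slope (Vf i.-1) (Vf i).
Definition HN_r (Vf : nat -> {vspace V}) (i : nat) : nat := frank (Vf i.-1) (Vf i).

Definition HN_positive (ell : nat) (Vf : nat -> {vspace V}) : Prop :=
  0 < \sum_(1 <= i < ell.+1) (HN_r Vf i)%:R * HN_mu Vf i.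

End Filtrations.

Section Tensors.
Variables (k : fieldType) (V : vectType k).

(* V^{⊗ m} realised in coordinates w.r.t. the basis vbasis fullv of V:
   functions on m-tuples of basis indices. *)
Definition tens_index (m : nat) := {ffun 'I_m -> 'I_(\dim (fullv : {vspace V}))}.
Definition tensor_power (m : nat) := {ffun tens_index m -> k^o}.

Definition pure_tensor (m : nat) (vs : 'I_m -> V) : tensor_power m :=
  [ffun i : tens_index m => \prod_(j < m) coord (vbasis fullv) (i j) (vs j)].

Definition tens_sub (m : nat) (W : 'I_m -> {vspace V}) : {vspace tensor_power m} :=
  (<< [seq pure_tensor (fun j => (vbasis (W j))`_(f j)) | f : tens_index m] >>)%VS.

End Tensors.

(* H^{#S_{m,z}} = sum over a in S_{m,z}(mu) of V_{a_1} ⊗ ... ⊗ V_{a_m};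
   an element a of [ell]^m is encoded by a : {ffun 'I_m -> 'I_ell}, a_j = (a j).+1 *)
Definition H_Smz (k : fieldType) (V : vectType k) (R : realType)
    (mu : nat -> R) (ell : nat) (Vf : nat -> {vspace V}) (m z : nat)
    : {vspace tensor_power V m} :=
  (\sum_(a : {ffun 'I_m -> 'I_ell} | (z%:R <= \sum_(j < m) mu (a j).+1)%R)
      tens_sub (fun j => Vf (a j).+1))%VS.

From HB Require Import structures.
From mathcomp Require Import all_boot all_order all_algebra.
From mathcomp Require Import all_classical all_reals all_analysis.
From mathcomp Require Import ring lra.
Set Implicit Arguments.
Unset Strict Implicit.
Unset Printing Implicit Defensive.

Import Order.TTheory GRing.Theory Num.Theory.
Import numFieldNormedType.Exports.
Local Open Scope classical_set_scope.
Local Open Scope ring_scope.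

(* Take a basis e_1, ..., e_n of V adapted to the Harder-Narasimhan flag, giving
   weight w_t = mu_(i+1) to the basis vectors chosen in a complement of V_i in
   V_(i+1).  The pure tensors e_(b_1) (x) ... (x) e_(b_m) form a basis of V^(x)m,
   and one of them lies in H^#S_(m,z) as soon as its total weight sum_j w_(b_j)
   is at least z.  Positivity of the HN data says that the mean weight M is
   positive, so for a uniformly random tuple b the total weight has mean m M and
   variance m Var(w); by Chebyshev, once z <= m M / 2 the tuples of weight < z
   form a proportion O(1/m) of all n^m tuples.  Their pure tensors together with
   H^#S_(m,z) span V^(x)m, so the codimension of H^#S_(m,z) is O(n^m / m). *)

Section TensorPowerSpan.
Variables (k : fieldType) (V : vectType k).
Local Notation n := (\dim (fullv : {vspace V})).
Local Notation B := (vbasis (fullv : {vspace V})).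

Lemma memv_span_widen (X : seq V) p v : (size X <= p)%N -> v \in <<X>>%VS ->
  exists c : 'I_p -> k, v = \sum_(t < p) c t *: X`_t.
Proof.
elim: X p v => [|x X IH] p v.
  move=> _; rewrite span_nil memv0 => /eqP ->.
  by exists (fun _ => 0); rewrite big1 // => t _; rewrite scale0r.
case: p => // p /= leXp; rewrite span_cons => /memv_addP [_ /vlineP [a ->]].
move=> [w /(IH p _ leXp) [c ->] ->].
exists (fun t => oapp c a (unlift ord0 t)).
rewrite big_ord_recl unlift_none; congr (_ + _).
by apply: eq_bigr => i _; rewrite liftK.
Qed.

Lemma pure_tensor_sum m (X : 'I_m -> seq V) (c : 'I_m -> 'I_n -> k) :
  pure_tensor (fun j => \sum_(t < n) c j t *: (X j)`_t) =
  \sum_(f : tens_index V m) (\prod_j c j (f j)) *: pure_tensor (fun j => (X j)`_(f j)).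
Proof.
apply/ffunP => i; rewrite ffunE sum_ffunE.
under eq_bigr do rewrite linear_sum.
under eq_bigr do under eq_bigr do rewrite linearZ.
rewrite bigA_distr_bigA; apply: eq_bigr => f _.
by rewrite !ffunE big_split.
Qed.

Lemma pure_tensor_mem_span m (X : 'I_m -> seq V) (v : 'I_m -> V) :
  (forall j, size (X j) <= n)%N -> (forall j, v j \in <<X j>>%VS) ->
  pure_tensor v \in
    <<[seq pure_tensor (fun j => (X j)`_(f j)) | f : tens_index V m]>>%VS.
Proof.
move=> sizeX vX.
have [c vE] : exists c : 'I_m -> 'I_n -> k,
    forall j, v j = \sum_(t < n) c j t *: (X j)`_t.
  apply: (@fin_all_exists _ (fun _ => 'I_n -> k)
    (fun j c => v j = \sum_(t < n) c t *: (X j)`_t)) => j.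
  exact: memv_span_widen.
rewrite (_ : v = fun j => \sum_(t < n) c j t *: (X j)`_t); last exact: funext.
rewrite pure_tensor_sum; apply: rpred_sum => f _; apply/rpredZ/memv_span.
by apply: map_f; rewrite mem_enum.
Qed.

Lemma pure_tensor_vbasis m (i : tens_index V m) :
  pure_tensor (fun j => B`_(i j)) = [ffun i' => ((i == i')%:R : k^o)].
Proof.
apply/ffunP => i'; rewrite !ffunE.
under eq_bigr do rewrite coord_free ?(basis_free (vbasisP _)) //.
have [<-|neq] := eqVneq i i'; first by rewrite big1 // => j _; rewrite eqxx.
have [j neqj] : exists j, i j != i' j.
  apply/existsP; apply: contraR neq; rewrite negb_exists => /forallP eqi.
  by apply/eqP/ffunP => j; apply/eqP/negPn.
by rewrite (bigD1 j) //= (negPf neqj) mul0r.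
Qed.

Lemma tensor_power_span m (e : seq V) : (size e <= n)%N -> (fullv <= <<e>>)%VS ->
  (fullv <= <<[seq pure_tensor (fun j => e`_(f j)) | f : tens_index V m]>>)%VS.
Proof.
move=> size_e span_e; apply/subvP => t _.
have -> : t = \sum_i t i *: pure_tensor (fun j => B`_(i j)).
  apply/ffunP => i'; under eq_bigr do rewrite pure_tensor_vbasis.
  rewrite sum_ffunE (bigD1 i') //= !ffunE eqxx big1 ?addr0 => [|i neq].
    exact: (esym (mulr1 _)).
  by rewrite !ffunE (negPf neq); exact: mulr0.
apply: rpred_sum => i _; apply/rpredZ/pure_tensor_mem_span => // j.
exact: subvP span_e _ (memvf _).
Qed.

Lemma dim_tensor_power m : \dim (fullv : {vspace tensor_power V m}) = (n ^ m)%N.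
Proof. by rewrite dimvf /dim /= card_ffun !card_ord muln1. Qed.

Lemma dim_tensor_power_le m (e : seq V) (good : pred (tens_index V m))
    (H : {vspace tensor_power V m}) :
  (size e <= n)%N -> (fullv <= <<e>>)%VS ->
  (forall f, good f -> pure_tensor (fun j => e`_(f j)) \in H) ->
  (n ^ m <= \dim H + #|predC good|)%N.
Proof.
move=> size_e span_e goodH.
set Bad := <<[seq pure_tensor (fun j => e`_(f j)) | f : tens_index V m in predC good]>>%VS.
have fullHBad : (fullv <= H + Bad)%VS.
  apply: subv_trans (tensor_power_span m size_e span_e) _.
  apply/span_subvP => _ /mapP [f _ ->]; have [gf|bf] := boolP (good f).
    by rewrite -[X in X \in _]addr0 memv_add ?mem0v ?goodH.
  by rewrite -[X in X \in _]add0r memv_add ?mem0v ?memv_span ?fintype.image_f.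
rewrite -(dim_tensor_power m); apply: leq_trans (dimvS fullHBad) _.
apply: leq_trans (dimv_add_leqif H Bad).1 _.
by rewrite leq_add2l (leq_trans (dim_span _)) // size_image.
Qed.

Lemma pure_tensor_mem_tens_sub m (W : 'I_m -> {vspace V}) (v : 'I_m -> V) :
  (forall j, v j \in W j) -> pure_tensor v \in tens_sub W.
Proof.
move=> vW; apply: pure_tensor_mem_span => j; last by rewrite (span_basis (vbasisP _)).
by rewrite size_tuple dimvS ?subvf.
Qed.

End TensorPowerSpan.

Lemma pure_tensor_mem_H_Smz (k : fieldType) (V : vectType k) (R : realType)
    (mu : nat -> R) (ell : nat) (Vf : nat -> {vspace V}) (m z : nat)
    (a : {ffun 'I_m -> 'I_ell}) (v : 'I_m -> V) :
  z%:R <= \sum_j mu (a j).+1 -> (forall j, v j \in Vf (a j).+1) ->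
  pure_tensor v \in H_Smz mu ell Vf m z.
Proof.
move=> heavy vVf; rewrite /H_Smz; apply: (subvP (sumv_sup a _ (subvv _))) => //.
exact: pure_tensor_mem_tens_sub.
Qed.

Section TupleSumMoments.
Variables (R : realFieldType) (n m : nat).
Local Notation tuples := {ffun 'I_m -> 'I_n}.

Lemma sum_tuples_coord (g : 'I_n -> R) (j : 'I_m) :
  n%:R * \sum_(b : tuples) g (b j) = n%:R ^+ m * \sum_t g t.
Proof.
have -> : \sum_(b : tuples) g (b j) =
    \sum_(b : tuples) \prod_i (if i == j then g (b i) else 1).
  by apply: eq_bigr => b _; rewrite (bigD1 j) //= eqxx big1 ?mulr1 // => i /negPf ->.
rewrite -(bigA_distr_bigA (fun i t => if i == j then g t else 1)) (bigD1 j) //= eqxx.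
have -> : \prod_(i | i != j) \sum_t (if i == j then g t else 1) = n%:R ^+ m.-1.
  rewrite (eq_bigr (fun _ => n%:R)) => [|i /negPf ->]; last by rewrite sumr_const card_ord.
  by rewrite (eq_bigl (mem (predC1 j))) // prodr_const cardC1 card_ord.
by case: m j => [[] //|m'] j; rewrite exprS /=; ring.
Qed.

Variable u : 'I_n -> R.
Hypothesis u_centered : \sum_t u t = 0.

Lemma sum_tuples_coord_mul (j j' : 'I_m) : j != j' ->
  \sum_(b : tuples) u (b j) * u (b j') = 0.
Proof.
move=> neq; have neq' : j' != j by rewrite eq_sym.
pose F i t := if i == j then u t else if i == j' then u t else 1.
have -> : \sum_(b : tuples) u (b j) * u (b j') = \sum_(b : tuples) \prod_i F i (b i).
  apply: eq_bigr => b _; rewrite (bigD1 j) //= (bigD1 j') //= /F eqxx (negPf neq') eqxx.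
  by rewrite big1 ?mulr1 // => i /andP [/negPf -> /negPf ->].
by rewrite -bigA_distr_bigA (bigD1 j) //= /F eqxx u_centered mul0r.
Qed.

Lemma sum_tuples_sqr_sum :
  n%:R * \sum_(b : tuples) (\sum_j u (b j)) ^+ 2 = m%:R * (n%:R ^+ m * \sum_t u t ^+ 2).
Proof.
have diag (b : tuples) : (\sum_j u (b j)) ^+ 2 = \sum_j \sum_j' u (b j) * u (b j').
  by rewrite expr2 mulr_suml; apply: eq_bigr => j _; rewrite mulr_sumr.
under eq_bigr do rewrite diag.
rewrite exchange_big big_distrr /=.
transitivity (\sum_(j < m) n%:R ^+ m * \sum_t u t ^+ 2).
  2: by rewrite sumr_const card_ord mulr_natl.
apply: eq_bigr => j _.
rewrite exchange_big (bigD1 j) //= [X in _ + X]big1 => [|j' neq].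
  by rewrite addr0; under eq_bigr do rewrite -expr2; exact: sum_tuples_coord.
by rewrite sum_tuples_coord_mul // eq_sym.
Qed.

Lemma card_tuples_deviation_le (a : R) : 0 <= a ->
  #|[pred b : tuples | a <= `|\sum_j u (b j)|]|%:R * a ^+ 2 * n%:R
    <= m%:R * (n%:R ^+ m * \sum_t u t ^+ 2).
Proof.
move=> a_ge0; rewrite -sum_tuples_sqr_sum mulrC ler_wpM2l // mulr_natl -sumr_const.
rewrite big_mkcond /=; apply: ler_sum => b _; case: ifP => [|_]; last exact: sqr_ge0.
rewrite inE => dev; rewrite -[X in _ <= X]real_normK ?num_real //.
by apply: lerXn2r; rewrite ?nnegrE.
Qed.

End TupleSumMoments.

Lemma card_tuples_small_sum_le (R : realFieldType) (n m : nat) (w : 'I_n -> R) (M z : R) :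
  n%:R * M = \sum_t w t -> 0 <= M -> z <= m%:R * M / 2 ->
  #|[pred b : {ffun 'I_m -> 'I_n} | \sum_j w (b j) < z]|%:R * (m%:R * M / 2) ^+ 2 * n%:R
    <= m%:R * (n%:R ^+ m * \sum_t (w t - M) ^+ 2).
Proof.
move=> meanM M_ge0 z_le; set a := m%:R * M / 2.
have centered : \sum_t (w t - M) = 0.
  by rewrite sumrB sumr_const card_ord -mulr_natl meanM subrr.
apply: le_trans (@card_tuples_deviation_le R n m _ centered a _); last first.
  by rewrite /a !mulr_ge0 ?invr_ge0.
rewrite !ler_wpM2r ?sqr_ge0 ?ler_nat //.
apply: subset_leq_card; apply/fintype.subsetP => b.
rewrite !inE sumrB sumr_const card_ord -mulr_natl => small.
rewrite ler_normr; apply/orP; right; rewrite /a; lra.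
Qed.

Lemma cvg_to_1_of_gap_le (R : realType) (r : nat -> R) (C : R) :
  (\forall m \near \oo, 1 - C / m%:R <= r m <= 1) -> r @ \oo --> (1 : R).
Proof.
move=> r_near; apply: (squeeze_cvgr r_near); last exact: cvg_cst.
have inv_cvg0 : (fun m : nat => (m%:R : R)^-1) @ \oo --> 0.
  apply/gtr0_cvgV0; last exact: cvgr_idn.
  by near=> m; rewrite ltr0n; near: m; exists 1%N.
rewrite -[X in _ --> X]subr0; apply: cvgB; first exact: cvg_cst.
by rewrite -(mulr0 C); apply: cvgMr.
Unshelve. all: end_near.
Qed.

Section HeavyTensors.
Variables (k : fieldType) (V : vectType k) (R : realType).
Local Notation n := (\dim (fullv : {vspace V})).
Variables (e : seq V) (w : 'I_n -> R) (z : R) (H : forall m, {vspace tensor_power V m}).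
Hypotheses (size_e : size e = n) (span_e : (fullv <= <<e>>)%VS) (w_pos : 0 < \sum_t w t).
Hypothesis heavyH : forall m (f : tens_index V m),
  z <= \sum_j w (f j) -> pure_tensor (fun j => e`_(f j)) \in H m.

Let M := (\sum_t w t) / n%:R.
Let C := 4 * (\sum_t (w t - M) ^+ 2) / (M ^+ 2 * n%:R).

Let n_gt0 : (0 < n)%N.
Proof.
rewrite lt0n; apply: contraTneq w_pos => n0; rewrite -leNgt big1 // => t _.
by move: (ltn_ord t); rewrite {2}n0.
Qed.

Let meanM : n%:R * M = \sum_t w t.
Proof. by rewrite mulrC divfK // pnatr_eq0 -lt0n n_gt0. Qed.

Let M_gt0 : 0 < M.
Proof. by rewrite divr_gt0 ?ltr0n. Qed.

Let card_light_tuples_le m : (0 < m)%N -> z <= m%:R * M / 2 ->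
  #|[pred f : tens_index V m | \sum_j w (f j) < z]|%:R <= C / m%:R * n%:R ^+ m.
Proof.
move=> m_gt0 z_le; have m_gt0' : 0 < m%:R :> R by rewrite ltr0n.
have half_gt0 : 0 < m%:R * M / 2 by apply: divr_gt0; [exact: mulr_gt0 | exact: ltr0Sn].
have pos : 0 < (m%:R * M / 2) ^+ 2 * n%:R by rewrite mulr_gt0 ?ltr0n ?exprn_gt0.
rewrite -(ler_pM2r pos) mulrA.
apply: le_trans (card_tuples_small_sum_le meanM (ltW M_gt0) z_le) _.
rewrite le_eqVlt; apply/orP; left; apply/eqP; rewrite /C; field.
by rewrite (gt_eqF m_gt0') (gt_eqF M_gt0) pnatr_eq0 -lt0n n_gt0.
Qed.

Let dim_heavy_ratio_bounds m : (0 < m)%N -> z <= m%:R * M / 2 ->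
  1 - C / m%:R <= ((\dim (H m))%:R / (\dim (fullv : {vspace tensor_power V m}))%:R : R) <= 1.
Proof.
move=> m_gt0 z_le; rewrite dim_tensor_power natrX.
have N_gt0 : 0 < n%:R ^+ m :> R by rewrite exprn_gt0 ?ltr0n.
set bad := #|[pred f : tens_index V m | \sum_j w (f j) < z]|.
have dim_le : (n ^ m <= \dim (H m) + bad)%N.
  have -> : bad = #|predC (fun f : tens_index V m => z <= \sum_j w (f j))|.
    by apply: eq_card => f; rewrite !inE -ltNge.
  exact: (dim_tensor_power_le (eq_leq size_e) span_e (@heavyH m)).
have dim_le' : n%:R ^+ m <= (\dim (H m))%:R + bad%:R :> R.
  by rewrite -natrX -natrD ler_nat.
have := card_light_tuples_le m_gt0 z_le; rewrite -/bad => bad_le.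
apply/andP; split; first by rewrite ler_pdivlMr // mulrBl mul1r; lra.
rewrite ler_pdivrMr // mul1r -natrX ler_nat -(dim_tensor_power V m).
exact/dimvS/subvf.
Qed.

Lemma dim_heavy_tensors_ratio_cvg1 :
  (fun m => (\dim (H m))%:R / (\dim (fullv : {vspace tensor_power V m}))%:R : R)
    @ \oo --> (1 : R).
Proof.
apply: (@cvg_to_1_of_gap_le _ _ C); near=> m; apply: dim_heavy_ratio_bounds.
  by near: m; exists 1%N.
have : 2 * z / M <= m%:R by near: m; exact: nbhs_infty_ger.
by rewrite ler_pdivrMr //; lra.
Unshelve. all: end_near.
Qed.

End HeavyTensors.

Lemma dimv_diff_sub (k : fieldType) (V : vectType k) (U W : {vspace V}) :
  (U <= W)%VS -> \dim (W :\: U) = (\dim W - \dim U)%N.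
Proof.
by move=> sUW; rewrite -(dimv_cap_compl W U) (capv_idPr sUW) addKn.
Qed.

Section FlagBasis.
Variables (k : fieldType) (V : vectType k) (Vf : nat -> {vspace V}) (ell : nat).
Hypotheses (Vf0 : Vf 0%N = 0%VS) (Vf_mono : forall i, (i < ell)%N -> (Vf i <= Vf i.+1)%VS).

Definition flag_basis j : seq (V * nat) :=
  [seq (x, i) | i <- iota 0 j, x <- vbasis (Vf i.+1 :\: Vf i)].

Lemma flag_basisS j :
  flag_basis j.+1 = flag_basis j ++ [seq (x, j) | x <- vbasis (Vf j.+1 :\: Vf j)].
Proof. by rewrite /flag_basis -addn1 iotaD allpairs_cat /= cats0 add0n addn1. Qed.

Lemma size_flag_basis j : (j <= ell)%N -> size (flag_basis j) = \dim (Vf j).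
Proof.
elim: j => [|j IH] le_j; first by rewrite Vf0 dimv0.
have sVf := Vf_mono le_j.
rewrite flag_basisS size_cat IH ?(ltnW le_j) // size_map size_tuple.
by rewrite dimv_diff_sub // subnKC // dimvS.
Qed.

Lemma span_flag_basis j : (j <= ell)%N -> (<<unzip1 (flag_basis j)>> = Vf j)%VS.
Proof.
elim: j => [|j IH] le_j; first by rewrite Vf0 span_nil.
rewrite flag_basisS /unzip1 map_cat span_cat -/(unzip1 _) IH ?(ltnW le_j) //.
rewrite -map_comp map_id (span_basis (vbasisP _)) addvC addv_diff.
exact/addv_idPl/Vf_mono.
Qed.

Lemma mem_flag_basis j p : p \in flag_basis j -> (p.2 < j)%N /\ p.1 \in Vf p.2.+1.
Proof.
case/allpairsPdep => i [x [+ /vbasis_mem x_diff ->]]; rewrite mem_iota => /= lt_i.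
by split=> //; apply: subvP (diffvSl _ _) _ x_diff.
Qed.

Lemma sum_flag_basis_level (T : nmodType) j (F : nat -> T) : (j <= ell)%N ->
  \sum_(p <- flag_basis j) F p.2 = \sum_(i < j) F i *+ (\dim (Vf i.+1) - \dim (Vf i)).
Proof.
move=> le_j; rewrite big_allpairs_dep.
rewrite -(big_mkord xpredT (fun i => F i *+ (\dim (Vf i.+1) - \dim (Vf i)))).
rewrite /index_iota subn0.
apply: eq_big_seq => i; rewrite mem_iota => /= lt_i.
rewrite big_tnth sumr_const card_ord size_tuple dimv_diff_sub //.
by apply: Vf_mono; exact: leq_trans le_j.
Qed.

End FlagBasis.

Theorem theorem1p5 (k : closedFieldType) (hk : [pchar k] =i pred0)
    (V : vectType k) (R : realType) (N : nat) (lam : nat -> R)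
    (F : nat -> {vspace V}) (ell : nat) (Vf : nat -> {vspace V}) (z : nat) :
  is_filtration N lam F ->
  is_HN N lam F ell Vf ->
  HN_positive N lam F ell Vf ->
  (fun m : nat =>
     (\dim (H_Smz (HN_mu N lam F Vf) ell Vf m z))%:R
       / (\dim (fullv : {vspace tensor_power V m}))%:R : R)
    @ \oo --> (1 : R).
Proof.
move=> _ [_ Vf0 Vf_ell Vf_chain _] HN_pos.
have Vf_mono i : (i < ell)%N -> (Vf i <= Vf i.+1)%VS.
  by move=> lt_i; case/andP: (Vf_chain i lt_i).
set mu := HN_mu N lam F Vf; set P := flag_basis Vf ell.
have size_P : size P = \dim (fullv : {vspace V}).
  by rewrite (size_flag_basis Vf0 Vf_mono) // Vf_ell.
pose lev (t : 'I_(\dim (fullv : {vspace V}))) := (nth (0, 0%N) P t).2.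
have lev_mem t : (lev t < ell)%N /\ (unzip1 P)`_t \in Vf (lev t).+1.
  rewrite /unzip1 (nth_map (0, 0%N)) ?size_P //.
  by apply: mem_flag_basis; rewrite mem_nth ?size_P.
apply: (dim_heavy_tensors_ratio_cvg1 (e := unzip1 P) (w := fun t => mu (lev t).+1)
  (z := z%:R)).
- by rewrite size_map.
- by rewrite (span_flag_basis Vf0 Vf_mono) // Vf_ell.
- rewrite /lev -(big_mkord xpredT (fun t => mu (nth (0, 0%N) P t).2.+1)) -size_P.
  rewrite -(big_nth _ xpredT (fun p => mu p.2.+1)) /P.
  rewrite (sum_flag_basis_level Vf_mono (fun i => mu i.+1)) //.
  move: HN_pos; rewrite /HN_positive big_add1 big_mkord.
  by under eq_bigr do rewrite mulr_natl.
- move=> m f heavy.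
  pose a : {ffun 'I_m -> 'I_ell} := [ffun j => Ordinal (lev_mem (f j)).1].
  apply: (pure_tensor_mem_H_Smz (a := a)) => [|j]; rewrite ?ffunE //=.
  + by under eq_bigr do rewrite ffunE.
  + exact: (lev_mem (f j)).2.
Qed.
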